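(* Let $m\ge 1$ and $d_k\ge 1$ be integers, let $u\in\mathbb{R}^m$ with $\|u\|=1$, and let $g_1,\ldots,g_{d_k}\in\mathbb{R}^m$ be vectors such that no $g_i$ is colinear with $u$. Consider the optimization problem $$\min_{V_1,\ldots,V_{d_k}\in\mathbb{R}^m}\ \sum_{i=1}^{d_k} V_i^T g_i \quad\text{subject to}\quad u^T\Big(\sum_{j=1}^{d_k} V_j\Big)=2-d_k,\qquad \|V_i\|=1\ \ (i=1,\ldots,d_k).$$ Then at an optimum $(V_1^*,\ldots,V_{d_k}^* )$ of this problem, every vector $V_i^*$ lies in the (two-dimensional) linear subspace of $\mathbb{R}^m$ spanned by $g_i$ and $u$.
   Context: This problem is the block subproblem arising in a low-rank (Burer–Monteiro) SDP relaxation of a pairwise discrete graphical model: the $V_i$ are the rows of the low-rank factor associated with the $d_k$ values of a discrete variable $x_k$, $u$ is the fixed last row $V_{d+1}$ of the factor, and the $g_i$ are fixed vectors determined by the other rows. $\|\cdot\|$ is the Euclidean norm. *)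

From HB Require Import structures.
From mathcomp Require Import all_boot all_order all_algebra.
From mathcomp Require Import reals.
Set Implicit Arguments. Unset Strict Implicit. Unset Printing Implicit Defensive.
Import Order.TTheory GRing.Theory Num.Theory.
Local Open Scope ring_scope.

Definition dotv (R : realType) (m : nat) (x y : 'rV[R]_m) : R :=
  \sum_(k < m) x 0 k * y 0 k.

Definition normv (R : realType) (m : nat) (x : 'rV[R]_m) : R :=
  Num.sqrt (dotv x x).

Definition colinear (R : realType) (m : nat) (x y : 'rV[R]_m) : Prop :=
  exists a b : R, (a != 0 \/ b != 0) /\ a *: x + b *: y = 0.

Definition feasible (R : realType) (m dk : nat) (u : 'rV[R]_m)
  (V : 'I_dk -> 'rV[R]_m) : Prop :=
  dotv u (\sum_(j < dk) V j) = 2 - dk%:R /\ forall i, normv (V i) = 1.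

Definition objective (R : realType) (m dk : nat) (g V : 'I_dk -> 'rV[R]_m) : R :=
  \sum_(i < dk) dotv (V i) (g i).

Definition is_optimum (R : realType) (m dk : nat) (u : 'rV[R]_m)
  (g V : 'I_dk -> 'rV[R]_m) : Prop :=
  feasible u V /\ forall W, feasible u W -> objective g V <= objective g W.

(** Fix all blocks but the i-th one.  Writing [V_i = a u + r] and [g_i = b u + h]
    with [r, h] orthogonal to [u] (and [h <> 0] since [g_i] is not colinear with
    [u]), the constraints only fix [a] and [|r| = sqrt (1 - a^2)], while the
    objective term is [V_i . g_i = a b + r . h].  By Cauchy-Schwarz this is
    minimised exactly at [r = - |r| h / |h|], which lies in span(g_i, u); any
    other feasible [V_i] is strictly improved by that choice, so it cannot be
    part of an optimum. *)

From HB Require Import structures.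
From mathcomp Require Import all_boot all_order all_algebra.
From mathcomp Require Import reals.
From mathcomp Require Import ring lra.
Set Implicit Arguments. Unset Strict Implicit. Unset Printing Implicit Defensive.
Import Order.TTheory GRing.Theory Num.Theory.
Local Open Scope ring_scope.

Section InnerProduct.
Variables (R : realType) (m : nat).
Implicit Types (x y z : 'rV[R]_m) (k : R).

Lemma dotvC x y : dotv x y = dotv y x.
Proof. by apply: eq_bigr => j _; rewrite mulrC. Qed.

Lemma dotvDl x y z : dotv (x + y) z = dotv x z + dotv y z.
Proof. by rewrite /dotv -big_split; apply: eq_bigr => j _; rewrite mxE mulrDl. Qed.

Lemma dotvZl k x y : dotv (k *: x) y = k * dotv x y.
Proof. by rewrite /dotv mulr_sumr; apply: eq_bigr => j _; rewrite mxE mulrA. Qed.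

Lemma dotvNl x y : dotv (- x) y = - dotv x y.
Proof. by rewrite -scaleN1r dotvZl mulN1r. Qed.

Lemma dotvDr x y z : dotv x (y + z) = dotv x y + dotv x z.
Proof. by rewrite !(dotvC x) dotvDl. Qed.

Lemma dotvZr k x y : dotv x (k *: y) = k * dotv x y.
Proof. by rewrite !(dotvC x) dotvZl. Qed.

Lemma dotvNr x y : dotv x (- y) = - dotv x y.
Proof. by rewrite !(dotvC x) dotvNl. Qed.

Definition dotvE := (dotvDl, dotvDr, dotvNl, dotvNr, dotvZl, dotvZr).

Lemma dotv0r x : dotv x 0 = 0.
Proof. by rewrite /dotv big1 // => j _; rewrite mxE mulr0. Qed.

Lemma dotv_sumr n x (F : 'I_n -> 'rV[R]_m) :
  dotv x (\sum_(j < n) F j) = \sum_(j < n) dotv x (F j).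
Proof. exact: (big_morph _ (dotvDr x) (dotv0r x)). Qed.

Lemma dotvv_ge0 x : 0 <= dotv x x.
Proof. by apply: sumr_ge0 => j _; rewrite -expr2 sqr_ge0. Qed.

Lemma dotvv_eq0 x : (dotv x x == 0) = (x == 0).
Proof.
apply/eqP/eqP => [x0 | ->]; last exact: dotv0r.
apply/rowP => j; rewrite mxE; apply/eqP; rewrite -sqrf_eq0 expr2.
have xx_ge0 (i : 'I_m) : true -> 0 <= x 0 i * x 0 i by rewrite -expr2 sqr_ge0.
exact/eqP/(psumr_eq0P xx_ge0 x0).
Qed.

Lemma dotvv_gt0 x : x != 0 -> 0 < dotv x x.
Proof. by move=> x_neq0; rewrite lt_def dotvv_eq0 x_neq0 dotvv_ge0. Qed.

Lemma sqr_normv x : normv x ^+ 2 = dotv x x.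
Proof. exact/sqr_sqrtr/dotvv_ge0. Qed.

Lemma normv_eq1 x : normv x = 1 <-> dotv x x = 1.
Proof. by split=> [x1 | xx1]; [rewrite -sqr_normv x1 expr1n | rewrite /normv xx1 sqrtr1]. Qed.

Lemma normv_gt0 x : x != 0 -> 0 < normv x.
Proof. by move=> /dotvv_gt0; rewrite sqrtr_gt0. Qed.

Lemma dotv_orthogonal_proj u x : dotv u u = 1 -> dotv u (x - dotv u x *: u) = 0.
Proof. by move=> uu1; rewrite !dotvE uu1 mulr1 subrr. Qed.

Lemma dotv_CauchySchwarz_lt x y :
  y != 0 -> (forall k, x != k *: y) -> `|dotv x y| < normv x * normv y.
Proof.
move=> y_neq0 x_notin.
have yy_gt0 := dotvv_gt0 y_neq0.
pose k := dotv x y / dotv y y.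
have residual : dotv (x - k *: y) (x - k *: y) = dotv x x - dotv x y ^+ 2 / dotv y y.
  by rewrite !dotvE (dotvC y x) /k; field; exact: lt0r_neq0.
have residual_gt0 : 0 < dotv x x - dotv x y ^+ 2 / dotv y y.
  by rewrite -residual dotvv_gt0 // subr_eq0.
have sqr_lt : dotv x y ^+ 2 < dotv x x * dotv y y.
  by move: residual_gt0; rewrite subr_gt0 ltr_pdivrMr.
rewrite -sqrtr_sqr /normv -sqrtrM ?dotvv_ge0 // ltr_sqrt //.
by apply: le_lt_trans sqr_lt; exact: sqr_ge0.
Qed.

End InnerProduct.

Lemma lincomb_sub_col_mx (F : fieldType) (n : nat) (a b : F) (x y : 'rV[F]_n) :
  ((a *: x + b *: y)%R <= col_mx x y)%MS.
Proof. by rewrite -addsmxE; apply: addmx_sub_adds; apply: scalemx_sub. Qed.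

Section BlockImprovement.
Variables (R : realType) (m : nat) (u g : 'rV[R]_m).
Hypotheses (uu1 : dotv u u = 1) (g_ncolinear : ~ colinear g u).

Lemma improve_outside_span v :
  dotv v v = 1 -> ~~ (v <= col_mx g u)%MS ->
  exists w, [/\ dotv u w = dotv u v, dotv w w = 1 & dotv w g < dotv v g].
Proof.
move=> vv1 v_notin.
set a := dotv u v; set b := dotv u g.
have [r rE] : {r | r = v - a *: u} by exists (v - a *: u).
have [h hE] : {h | h = g - b *: u} by exists (g - b *: u).
have uh0 : dotv u h = 0 by rewrite hE; exact: dotv_orthogonal_proj.
have h_neq0 : h != 0.
  apply/eqP; rewrite hE => h0; apply: g_ncolinear; exists 1, (- b).
  by split; [left; exact: oner_neq0 | rewrite scale1r scaleNr].
have r_notin k : r != k *: h.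
  apply: contra v_notin => /eqP; rewrite rE hE => rE'.
  have -> : v = k *: g + (a - k * b) *: u.
    apply/rowP => j; move/rowP/(_ j): rE'; rewrite !mxE => rE'.
    by rewrite -[v 0 j](subrK (a * u 0 j)) rE'; ring.
  exact: lincomb_sub_col_mx.
have rr : normv r ^+ 2 = 1 - a ^+ 2.
  by rewrite sqr_normv rE !dotvE (dotvC v u) vv1 uu1 -/a; ring.
have hh : normv h ^+ 2 = dotv h h by exact: sqr_normv.
have nh_neq0 : normv h != 0 by exact/lt0r_neq0/normv_gt0.
have vg : dotv v g = a * b + dotv r h.
  by rewrite rE hE !dotvE (dotvC v u) uu1 -/a -/b; ring.
pose c := normv r / normv h.
exists (a *: u - c *: h); split.
- by rewrite !dotvE uu1 uh0; ring.
- rewrite !dotvE (dotvC h u) uu1 uh0 -hh.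
  by rewrite -[RHS](subrK (a ^+ 2)) -rr /c; field.
- have gE : g = h + b *: u by rewrite hE subrK.
  rewrite vg [in dotv _ g]gE !dotvE (dotvC h u) uu1 uh0 -hh.
  have -> : c * normv h ^+ 2 = normv r * normv h by rewrite /c; field.
  have /ltr_normlP[cs _] := dotv_CauchySchwarz_lt h_neq0 r_notin.
  rewrite !mulr0 !mulr1 subr0 sub0r; lra.
Qed.

End BlockImprovement.

Lemma optimum_block_le (R : realType) (m dk : nat) (u : 'rV[R]_m)
    (g V : 'I_dk -> 'rV[R]_m) (i : 'I_dk) (w : 'rV[R]_m) :
  is_optimum u g V -> dotv u w = dotv u (V i) -> normv w = 1 ->
  dotv (V i) (g i) <= dotv w (g i).
Proof.
move=> [[sumV normV] V_min] uw w1.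
pose W j := if j == i then w else V j.
have W_feasible : feasible u W.
  split=> [|j]; last by rewrite /W; case: eqP.
  rewrite dotv_sumr -sumV dotv_sumr; apply: eq_bigr => j _.
  by rewrite /W; case: eqP => // ->.
have := V_min W W_feasible.
rewrite /objective (bigD1 i) //= [X in _ <= X](bigD1 i) //= {1}/W eqxx.
rewrite [X in _ <= _ + X](eq_bigr (fun j => dotv (V j) (g j))) ?lerD2r //.
by move=> j /negbTE ji; rewrite /W ji.
Qed.

Theorem theorem2 (R : realType) (m dk : nat) (hm : (1 <= m)%N) (hdk : (1 <= dk)%N)
  (u : 'rV[R]_m) (g : 'I_dk -> 'rV[R]_m)
  (hu : normv u = 1) (hg : forall i, ~ colinear (g i) u)
  (V : 'I_dk -> 'rV[R]_m) (hV : is_optimum u g V) :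
  forall i, (V i <= col_mx (g i) u)%MS.
Proof.
move=> i; apply/idPn => V_notin.
have uu1 : dotv u u = 1 by exact/normv_eq1.
have Vi1 : dotv (V i) (V i) = 1 by apply/normv_eq1; case: hV => [[_ ->]].
have [w [uw ww1 w_better]] := improve_outside_span uu1 (hg i) Vi1 V_notin.
have := optimum_block_le hV uw (proj2 (normv_eq1 w) ww1).
by rewrite leNgt w_better.
Qed.
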